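(* Let $H$ be an undirected graph and let $I$ be an induced minor of $H$. Then $\mathrm{dtw}(I)\le\mathrm{dtw}(H)$.
   Context: A graph $I$ is an induced minor of $H$ if it can be obtained from $H$ by deleting vertices and contracting edges. For a DAG $\vec H$, a source is a vertex of in-degree $0$; $S$ denotes the set of sources; $R(s)$ is the set of vertices reachable from $s$, and $R(B)=\bigcup_{s\in B}R(s)$. A DAG tree decomposition of $\vec H$ is a tree $T$ whose nodes (bags) are subsets of $S$ such that every source lies in some bag and, for any bags $B,B_1,B_2$ with $B$ on the path between $B_1$ and $B_2$ in $T$, $R(B_1)\cap R(B_2)\subseteq R(B)$; its width is the maximum bag size and $\mathrm{dtw}(\vec H)$ is the minimum width. For an undirected graph, $\mathrm{dtw}$ is the maximum of $\mathrm{dtw}(\vec H)$ over all its acyclic orientations $\vec H$. *)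

From mathcomp Require Import all_boot.
From Stdlib Require Import ClassicalEpsilon.
Set Implicit Arguments. Unset Strict Implicit. Unset Printing Implicit Defensive.

(** Finite (undirected) graphs: a vertex set inside a finite ambient type and
    an adjacency relation; only adjacencies between vertices of [verts] count. *)
Record graph (T : finType) := Graph { verts : {set T}; adj : rel T }.

Definition edge (T : finType) (G : graph T) (x y : T) : bool :=
  [&& x \in verts G, y \in verts G & adj G x y].

Definition simple_graph (T : finType) (G : graph T) : Prop :=
  (forall x y, edge G x y = edge G y x) /\ (forall x, ~~ edge G x x).

Definition delete_vertex (T : finType) (G : graph T) (v : T) : graph T :=
  Graph (verts G :\ v) (adj G).

(** contracting the edge uv: v is merged into u *)
Definition contract_edge (T : finType) (G : graph T) (u v : T) : graph T :=
  Graph (verts G :\ v)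
        (fun x y => (x != y) &&
           [|| adj G x y, (x == u) && adj G v y | (y == u) && adj G x v]).

Inductive minor_step (T : finType) (G : graph T) : graph T -> Prop :=
  | MS_del v : v \in verts G -> minor_step G (delete_vertex G v)
  | MS_con u v : edge G u v -> minor_step G (contract_edge G u v).

Inductive del_con_seq (T : finType) : graph T -> graph T -> Prop :=
  | DC_refl G : del_con_seq G G
  | DC_step G G' G'' : minor_step G G' -> del_con_seq G' G'' -> del_con_seq G G''.

Definition graph_iso (U T : finType) (G1 : graph U) (G2 : graph T) : Prop :=
  exists phi : U -> T,
    [/\ {in verts G1 &, injective phi},
        phi @: verts G1 = verts G2 &
        {in verts G1 &, forall x y, edge G1 x y = edge G2 (phi x) (phi y)}].

Definition induced_minor (U T : finType) (I : graph U) (H : graph T) : Prop :=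
  exists H' : graph T, del_con_seq H H' /\ graph_iso I H'.

Definition acyclic_orientation (T : finType) (G : graph T) (D : rel T) : Prop :=
  [/\ forall x y, D x y -> edge G x y,
      forall x y, edge G x y -> D x y || D y x,
      forall x y, D x y -> ~~ D y x &
      forall x y, D x y -> ~~ connect D y x].

Definition sources (T : finType) (G : graph T) (D : rel T) : {set T} :=
  [set s in verts G | [forall x, ~~ D x s]].

Definition reach (T : finType) (D : rel T) (s : T) : {set T} :=
  [set x | connect D s x].

Definition reachB (T : finType) (D : rel T) (B : {set T}) : {set T} :=
  \bigcup_(s in B) reach D s.

Definition is_tree (K : finType) (te : rel K) : Prop :=
  [/\ 0 < #|K|, symmetric te, irreflexive te,
      forall x y, connect te x y &
      forall x p q, path te x p -> path te x q -> uniq (x :: p) -> uniq (x :: q) ->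
        last x p = last x q -> p = q].

Definition on_path (K : finType) (te : rel K) (k1 k2 b : K) : Prop :=
  exists p, [/\ path te k1 p, last k1 p = k2, uniq (k1 :: p) & b \in k1 :: p].

Definition dag_tree_decomposition (T : finType) (G : graph T) (D : rel T)
    (K : finType) (te : rel K) (bag : K -> {set T}) : Prop :=
  [/\ is_tree te,
      forall k, bag k \subset sources G D,
      forall s, s \in sources G D -> exists k, s \in bag k &
      forall b k1 k2, on_path te k1 k2 b ->
        reachB D (bag k1) :&: reachB D (bag k2) \subset reachB D (bag b)].

Definition dtd_width (K : finType) (T : finType) (bag : K -> {set T}) : nat :=
  \max_(k : K) #|bag k|.

Definition dag_dtw_le (T : finType) (G : graph T) (D : rel T) (k : nat) : Prop :=
  exists (K : finType) (te : rel K) (bag : K -> {set T}),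
    dag_tree_decomposition G D te bag /\ dtd_width bag <= k.

Definition dtw_le (T : finType) (G : graph T) (k : nat) : Prop :=
  forall D, acyclic_orientation G D -> dag_dtw_le G D k.

Definition dtw_leb (T : finType) (G : graph T) (k : nat) : bool :=
  if excluded_middle_informative (dtw_le G k) then true else false.

Lemma dtw_leb_exists (T : finType) (G : graph T) : exists k, dtw_leb G k.
Proof.
exists #|T|; rewrite /dtw_leb; case: excluded_middle_informative => // [[]].
move=> D HD; exists unit, (fun _ _ => false), (fun _ => sources G D); split.
- split.
  + split.
    * by apply/card_gt0P; exists tt.
    * by move=> [] [].
    * by move=> [].
    * by case; case; rewrite connect0.
    * by move=> x [|? ?] [|? ?].
  + by [].
  + by move=> s Hs; exists tt.
  + by move=> [] [] [] _; rewrite setIid.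
- by rewrite /dtd_width (big_pred1 tt) // max_card.
Qed.

(** dtw(G) = max over acyclic orientations D of dtw(D)
           = least k such that every acyclic orientation has dtw <= k *)
Definition dtw (T : finType) (G : graph T) : nat := ex_minn (dtw_leb_exists G).

From mathcomp Require Import all_boot.
From Stdlib Require Import ClassicalEpsilon.
Set Implicit Arguments. Unset Strict Implicit. Unset Printing Implicit Defensive.

(* Deleting a vertex, contracting an edge or passing to an isomorphic graph can
   only decrease dtw.  An acyclic orientation of the smaller graph lifts to one of
   the larger graph with the same sources, and a DAG tree decomposition of the
   lift, restricted to these sources, decomposes the given orientation.  The
   interval condition is used in the equivalent form "for every vertex x, the
   nodes whose bag reaches x form a subtree".  For the deletion of v all edges at
   v point into v.  For the contraction of uv the lift orients the other edges as
   their projections and uv from top to bot; then a bag reaches x in the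
   contracted graph iff it reaches x in the lift, or it reaches bot in the lift
   and x is reachable from u.  In the latter case a source above top reaches both
   x and bot, so the two subtrees meet, and the union of two meeting subtrees is
   a subtree. *)

Section Reachability.
Variable T : finType.
Implicit Types (D : rel T) (G : graph T).

Lemma connect_ind_to D x (Q : T -> Prop) :
  Q x -> (forall s t, D s t -> connect D t x -> Q t -> Q s) ->
  forall s, connect D s x -> Q s.
Proof.
move=> Qx IH s /connectP [p]; elim: p s => [|t p IHp] s /=; first by move=> _ <-.
move=> /andP[Dst pt] ex; apply: (IH _ _ Dst) (IHp t pt ex).
by apply/connectP; exists p.
Qed.

Lemma connect_first_step D x y :
  connect D x y -> x != y -> exists2 z, D x z & connect D z y.
Proof.
case/connectP=> [[|z p] /= Hp -> ]; first by rewrite eqxx.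
by case/andP: Hp => Dxz Hp _; exists z => //; apply/connectP; exists p.
Qed.

Lemma connect_closed_in D (A : {set T}) s x :
  (forall a b, D a b -> b \in A) -> s \in A -> connect D s x -> x \in A.
Proof.
move=> DA As /connectP [p]; elim: p s As => [|y p IHp] s As /=; first by move=> _ ->.
by case/andP=> /DA Ay Hp; apply: IHp.
Qed.

Lemma reachBP D (B : {set T}) x :
  reflect (exists2 s, s \in B & connect D s x) (x \in reachB D B).
Proof.
apply: (iffP bigcupP) => [[s Hs]|[s Hs Hc]]; first by rewrite inE; exists s.
by exists s; rewrite ?inE.
Qed.

Lemma sources_verts G D : sources G D \subset verts G.
Proof. by apply/subsetP => s; rewrite inE => /andP[]. Qed.

Lemma reachB_verts G D (B : {set T}) :
  (forall a b, D a b -> edge G a b) -> B \subset verts G ->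
  reachB D B \subset verts G.
Proof.
move=> DG BG; apply/subsetP => x /reachBP [s Bs]; apply: connect_closed_in.
  by move=> a b /DG /and3P[].
exact: subsetP Bs.
Qed.

Lemma exists_source_connect G D y :
  acyclic_orientation G D -> y \in verts G ->
  exists2 s, s \in sources G D & connect D s y.
Proof.
case=> DG _ _ Dacyc.
elim: {y}#|[set z | connect D z y]| {-2}y (leqnn #|[set z | connect D z y]|) => [|n IH] y.
  rewrite leqn0 cards_eq0 => /eqP E; have := in_set0 y.
  by rewrite -E inE connect0.
move=> Hcard Gy; case Hsrc: [forall x, ~~ D x y].
  by exists y; [rewrite inE Gy Hsrc | exact: connect0].
move/negbT/forallPn: Hsrc => [x]; rewrite negbK => Dxy.
have Gx : x \in verts G by case/and3P: (DG _ _ Dxy).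
have ancestors_proper : [set z | connect D z x] \proper [set z | connect D z y].
  apply/properP; split.
    by apply/subsetP => z; rewrite !inE => Hz; apply: connect_trans Hz (connect1 Dxy).
  by exists y; rewrite !inE ?connect0 //; apply: Dacyc.
have [s Hs Hsx] := IH x (leq_trans (proper_card ancestors_proper) Hcard) Gx.
by exists s => //; apply: connect_trans Hsx (connect1 Dxy).
Qed.

End Reachability.

Section TreeConvexity.
Variables (K : finType) (te : rel K).

Definition convex (P : K -> Prop) :=
  forall b k1 k2, on_path te k1 k2 b -> P k1 -> P k2 -> P b.

Lemma convex_ext (A B : K -> Prop) : convex A -> (forall k, A k <-> B k) -> convex B.
Proof. by move=> cA AB b k1 k2 Hb /AB H1 /AB H2; apply/AB; apply: (cA b k1 k2). Qed.

Lemma uniq_path_of_connect k1 k2 : connect te k1 k2 ->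
  exists p, [/\ path te k1 p, last k1 p = k2 & uniq (k1 :: p)].
Proof. by case/connectP=> p Hp ->; case: (shortenP Hp) => p' Hp' Hu _; exists p'. Qed.

(* The tree path from k1 to k2 is contained in the walk k1 ~> k0 ~> k2. *)
Lemma convex_union_path (A B : K -> Prop) k0 k1 k2 b :
  is_tree te -> convex A -> convex B -> A k0 -> B k0 -> A k1 -> B k2 ->
  on_path te k1 k2 b -> A b \/ B b.
Proof.
case=> _ _ _ te_conn te_uniq cA cB A0 B0 A1 B2 [p [Hp Hl Hu Hb]].
have [p1 [Hp1 Hl1 Hu1]] := uniq_path_of_connect (te_conn k1 k0).
have [p2 [Hp2 Hl2 Hu2]] := uniq_path_of_connect (te_conn k0 k2).
have onA c : c \in k1 :: p1 -> A c by move=> Hc; apply: (cA c k1 k0) => //; exists p1.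
have onB c : c \in k0 :: p2 -> B c by move=> Hc; apply: (cB c k0 k2) => //; exists p2.
have Hq : path te k1 (p1 ++ p2) by rewrite cat_path Hp1 Hl1 Hp2.
have : last k1 (p1 ++ p2) = k2 by rewrite last_cat Hl1 Hl2.
case: (shortenP Hq) => p' Hp' Hu' p'_sub Hl'.
have Ep : p = p' by apply: (te_uniq k1) => //; rewrite Hl Hl'.
move: Hb; rewrite Ep inE => /orP[/eqP->|/p'_sub]; first by left; apply/onA/mem_head.
rewrite mem_cat => /orP[H|H]; first by left; apply: onA; rewrite inE H orbT.
by right; apply: onB; rewrite inE H orbT.
Qed.

Lemma convex_union (A B : K -> Prop) k0 :
  is_tree te -> convex A -> convex B -> A k0 -> B k0 -> convex (fun k => A k \/ B k).
Proof.
move=> tree_te cA cB A0 B0 b k1 k2 Hb [A1|B1] [A2|B2].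
- by left; apply: (cA b k1 k2).
- exact: convex_union_path tree_te cA cB A0 B0 A1 B2 Hb.
- by apply/or_comm; apply: convex_union_path tree_te cB cA B0 A0 B1 A2 Hb.
- by right; apply: (cB b k1 k2).
Qed.

End TreeConvexity.

Section DecompositionTransfer.
Variables (T K : finType) (G : graph T) (D : rel T) (te : rel K).

Lemma dtd_convex (bag : K -> {set T}) :
  dag_tree_decomposition G D te bag ->
  forall x, convex te (fun k => x \in reachB D (bag k)).
Proof.
by case=> _ _ _ Hint x b k1 k2 Hb H1 H2; apply: (subsetP (Hint b k1 k2 Hb)); rewrite inE H1 H2.
Qed.

Lemma dtd_of_convex (bag : K -> {set T}) :
  is_tree te -> (forall a b, D a b -> edge G a b) ->
  (forall k, bag k \subset sources G D) ->
  (forall s, s \in sources G D -> exists k, s \in bag k) ->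
  (forall x, x \in verts G -> convex te (fun k => x \in reachB D (bag k))) ->
  dag_tree_decomposition G D te bag.
Proof.
move=> tree_te DG bag_src bag_cover Hconv; split => // b k1 k2 Hb.
apply/subsetP => x; rewrite inE => /andP[H1 H2].
have Gx : x \in verts G.
  apply: subsetP H1; apply: reachB_verts DG _.
  exact: subset_trans (bag_src k1) (sources_verts G D).
exact: Hconv Gx b k1 k2 Hb H1 H2.
Qed.

End DecompositionTransfer.

Lemma dtd_width_mono (K T T' : finType) (bag : K -> {set T}) (bag' : K -> {set T'}) :
  (forall k, #|bag' k| <= #|bag k|) -> dtd_width bag' <= dtd_width bag.
Proof. by move=> Hcard; apply/bigmax_leqP => k _; apply: leq_trans (Hcard k) (leq_bigmax k). Qed.

Section Deletion.
Variables (T : finType) (G : graph T) (v : T).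

Lemma edge_delete_vertex a b :
  edge (delete_vertex G v) a b = [&& a != v, b != v & edge G a b].
Proof. by rewrite /edge /= !in_setD1; case: (a != v); case: (b != v); rewrite /= ?andbF. Qed.

Lemma simple_delete_vertex : simple_graph G -> simple_graph (delete_vertex G v).
Proof.
case=> Gsym Gloop; split=> [x y|x]; rewrite !edge_delete_vertex.
  by rewrite Gsym; case: (x != v); case: (y != v).
by rewrite (negbTE (Gloop x)) !andbF.
Qed.

Hypothesis simpleG : simple_graph G.
Variable D' : rel T.
Hypothesis D'_acyclic : acyclic_orientation (delete_vertex G v) D'.

Definition orient_into : rel T := fun a b => D' a b || (b == v) && edge G a v.

Lemma D'_edge a b : D' a b -> [&& a != v, b != v & edge G a b].
Proof. by case: D'_acyclic => D'G _ _ _ /D'G; rewrite edge_delete_vertex. Qed.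

Lemma orient_into_from_v c : orient_into v c = false.
Proof.
rewrite /orient_into; case D'vc: (D' v c); first by have := D'_edge D'vc; rewrite eqxx.
by case: simpleG => _ Gloop; rewrite (negbTE (Gloop v)) andbF.
Qed.

Lemma connect_orient_into_from_v x : connect orient_into v x -> x = v.
Proof.
move=> C; apply/eqP/negPn/negP; rewrite eq_sym => /(connect_first_step C) [z].
by rewrite orient_into_from_v.
Qed.

Lemma connect_orient_intoE s x : x != v -> connect orient_into s x = connect D' s x.
Proof.
move=> xv; apply/idP/idP; last first.
  by apply: connect_sub => a b D'ab; apply: connect1; rewrite /orient_into D'ab.
move: s; apply: connect_ind_to => // a t /orP[D'at _|/andP[/eqP-> _]].
  exact: connect_trans (connect1 D'at).
by move/connect_orient_into_from_v => Exv; rewrite Exv eqxx in xv.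
Qed.

Lemma acyclic_orient_into : acyclic_orientation G orient_into.
Proof.
case: simpleG => Gsym Gloop; case: D'_acyclic => _ D'tot D'anti D'acyc; split.
- by move=> a b /orP[/D'_edge/and3P[] // | /andP[/eqP->]].
- move=> a b Gab; case: (eqVneq a v) => [Eav|av].
    by rewrite /orient_into Eav eqxx -Gsym -Eav Gab !orbT.
  case: (eqVneq b v) => [Ebv|bv]; first by rewrite /orient_into Ebv eqxx -Ebv Gab orbT.
  have : edge (delete_vertex G v) a b by rewrite edge_delete_vertex av bv.
  by move/D'tot => /orP[H|H]; rewrite /orient_into H ?orbT.
- move=> a b /orP[D'ab|/andP[/eqP-> _]]; last by rewrite orient_into_from_v.
  have /and3P[av _ _] := D'_edge D'ab.
  by rewrite /orient_into negb_or (negbTE (D'anti _ _ D'ab)) (negbTE av).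
- move=> a b /orP[D'ab|/andP[/eqP-> Gav]]; last first.
    by apply/negP => /connect_orient_into_from_v Eav; rewrite Eav (negbTE (Gloop v)) in Gav.
  have /and3P[av _ _] := D'_edge D'ab.
  by rewrite connect_orient_intoE // D'acyc.
Qed.

Lemma sources_orient_into : sources (delete_vertex G v) D' = sources G orient_into :\ v.
Proof.
apply/setP => s; rewrite !inE andbA; case: (eqVneq s v) => //= sv.
congr (_ && _); apply/eq_forallb => x.
by rewrite /orient_into (negbTE sv) orbF.
Qed.

Lemma dag_dtw_le_delete m :
  dag_dtw_le G orient_into m -> dag_dtw_le (delete_vertex G v) D' m.
Proof.
case=> K [te [bag [dtd Hw]]]; case: (dtd) => tree_te bag_src bag_cover _.
exists K, te, (fun k => bag k :\ v); split; last first.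
  by apply: leq_trans Hw; apply: dtd_width_mono => k; apply/subset_leq_card/subD1set.
apply: dtd_of_convex => //; first by case: D'_acyclic.
- by move=> k; rewrite sources_orient_into setSD.
- move=> s; rewrite sources_orient_into => /setD1P[sv /bag_cover[k Hk]].
  by exists k; rewrite in_setD1 sv.
move=> x; rewrite in_setD1 => /andP[xv _].
have x_convex := dtd_convex (x := x) dtd.
apply: (convex_ext x_convex) => k; split.
  case/reachBP=> s bag_s C; apply/reachBP; exists s; last by rewrite -connect_orient_intoE.
  rewrite in_setD1 bag_s andbT; apply: contraNneq xv => Esv.
  by apply/eqP/connect_orient_into_from_v; rewrite -Esv.
case/reachBP=> s /setD1P[_ bag_s] C; apply/reachBP; exists s => //.
by rewrite connect_orient_intoE.
Qed.

End Deletion.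

Section Contraction.
Variables (T : finType) (G : graph T) (u v : T).

Lemma edge_contract_edge a c : edge (contract_edge G u v) a c =
  [&& a != v, a \in verts G, c != v, c \in verts G, a != c &
      [|| adj G a c, (a == u) && adj G v c | (c == u) && adj G a v]].
Proof. by rewrite /edge /= !in_setD1 -!andbA. Qed.

Lemma adj_sym_in : simple_graph G -> {in verts G &, symmetric (adj G)}.
Proof. by case=> Gsym _ a c Ga Gc; have := Gsym a c; rewrite /edge Ga Gc. Qed.

Lemma simple_contract_edge : edge G u v -> simple_graph G -> simple_graph (contract_edge G u v).
Proof.
case/and3P=> _ Gv _ simpleG; split => [a c|x]; last by rewrite edge_contract_edge eqxx !andbF.
rewrite !edge_contract_edge.
case Ga: (a \in verts G); case Gc: (c \in verts G); rewrite ?andbF //=.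
rewrite !(adj_sym_in simpleG Ga) ?(adj_sym_in simpleG Gv) // [a == c]eq_sym.
by case: (a != v); case: (c != v); case: (c != a); case: (adj G c a);
   case: (a == u); case: (c == u); case: (adj G c v); case: (adj G a v).
Qed.

Hypotheses (Guv : edge G u v) (simpleG : simple_graph G).
Variable D' : rel T.
Hypothesis D'_acyclic : acyclic_orientation (contract_edge G u v) D'.

Definition contract_map (y : T) := if y == v then u else y.

(* Orienting uv from v to u exactly when some in-neighbour of u in D' is
   adjacent to v makes the sources of the lift those of D'. *)
Definition vu_oriented := [exists y, D' y u && edge G y v].
Definition top := if vu_oriented then v else u.
Definition bot := if vu_oriented then u else v.

Definition is_uv a c := ((a == u) && (c == v)) || ((a == v) && (c == u)).

Definition orient_uncontract : rel T := fun a c => edge G a c &&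
  (if is_uv a c then a == top else D' (contract_map a) (contract_map c)).

Local Notation pi := contract_map.
Local Notation L := orient_uncontract.

Lemma u_in : u \in verts G. Proof. by case/and3P: Guv. Qed.
Lemma v_in : v \in verts G. Proof. by case/and3P: Guv. Qed.

Lemma edge_sym a c : edge G a c = edge G c a.
Proof. by case: simpleG. Qed.

Lemma edge_irrefl a : ~~ edge G a a.
Proof. by case: simpleG. Qed.

Lemma u_neq_v : u != v.
Proof. by apply: contraTneq Guv => <-; exact: edge_irrefl. Qed.

Lemma top_bot : (top = u /\ bot = v) \/ (top = v /\ bot = u).
Proof. by rewrite /top /bot; case: vu_oriented; auto. Qed.

Lemma top_eq_v : (top == v) = vu_oriented.
Proof. by rewrite /top; case: vu_oriented; rewrite ?eqxx ?(negbTE u_neq_v). Qed.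

Lemma pi_nv a : a != v -> pi a = a. Proof. by rewrite /pi => /negbTE->. Qed.
Lemma pi_v : pi v = u. Proof. by rewrite /pi eqxx. Qed.
Lemma pi_u : pi u = u. Proof. exact: pi_nv u_neq_v. Qed.
Lemma pi_top : pi top = u. Proof. by case: top_bot => -[-> _]; rewrite ?pi_u ?pi_v. Qed.
Lemma pi_bot : pi bot = u. Proof. by case: top_bot => -[_ ->]; rewrite ?pi_u ?pi_v. Qed.

Lemma is_uv_sym a c : is_uv a c = is_uv c a.
Proof. by rewrite /is_uv orbC; case: (a == u); case: (a == v); case: (c == u); case: (c == v). Qed.

Lemma is_uvE a c : is_uv a c = ((a == top) && (c == bot)) || ((a == bot) && (c == top)).
Proof. by rewrite /is_uv; case: top_bot => -[-> ->] //; rewrite orbC. Qed.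

Lemma top_neq_bot : top != bot.
Proof. by case: top_bot => -[-> ->]; rewrite ?u_neq_v // eq_sym u_neq_v. Qed.

Lemma L_top_bot : L top bot.
Proof.
by rewrite /orient_uncontract is_uvE !eqxx /= andbT; case: top_bot => -[-> ->]; rewrite // edge_sym.
Qed.

Lemma L_top_bot_vu : if vu_oriented then L v u else L u v.
Proof. by have := L_top_bot; rewrite /top /bot; case: vu_oriented. Qed.

Lemma L_bot_top : L bot top = false.
Proof. by rewrite /orient_uncontract is_uvE !eqxx /= orbT eq_sym (negbTE top_neq_bot) andbF. Qed.

Lemma L_other a c : ~~ is_uv a c -> L a c = edge G a c && D' (pi a) (pi c).
Proof. by rewrite /orient_uncontract => /negbTE->. Qed.

Lemma edge_contract_map a c :
  edge G a c -> ~~ is_uv a c -> edge (contract_edge G u v) (pi a) (pi c).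
Proof.
move=> Gac; have ac : a != c by apply: contraTneq Gac => <-; exact: edge_irrefl.
case/and3P: (Gac) => Ga Gc adj_ac; rewrite /is_uv negb_or => /andP[H1 H2].
rewrite edge_contract_edge; case: (eqVneq a v) => [Eav|av]; case: (eqVneq c v) => [Ecv|cv].
- by rewrite Eav Ecv eqxx in ac.
- subst a; rewrite pi_v pi_nv // u_in Gc eqxx adj_ac /= orbT andbT.
  have cu : c != u by move: H2; rewrite eqxx.
  by rewrite u_neq_v cv eq_sym cu.
- subst c; rewrite pi_v pi_nv // u_in Ga eqxx adj_ac /= !orbT andbT.
  have au : a != u by move: H1; rewrite eqxx andbT.
  by rewrite u_neq_v av au.
- by rewrite !pi_nv // av cv Ga Gc ac adj_ac.
Qed.

Lemma D'_lift a c : D' a c -> [\/ L a c, a = u /\ L v c | c = u /\ L a v].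
Proof.
move=> D'ac; case: D'_acyclic => D'G _ _ _; move: (D'G _ _ D'ac).
rewrite edge_contract_edge; case/and5P=> av Ga cv Gc /andP[ac].
case/or3P=> [adj_ac|/andP[/eqP Eau adj_vc]|/andP[/eqP Ecu adj_av]].
- apply: Or31; rewrite L_other ?pi_nv //; first by rewrite /edge Ga Gc adj_ac.
  by rewrite /is_uv (negbTE av) (negbTE cv) !andbF.
- subst a; apply: Or32; split => //; rewrite L_other ?pi_v ?pi_nv //.
    by rewrite /edge v_in Gc adj_vc.
  by rewrite /is_uv eq_sym (negbTE u_neq_v) [c == u]eq_sym (negbTE ac) !andbF.
- subst c; apply: Or33; split => //; rewrite L_other ?pi_v ?pi_nv //.
    by rewrite /edge v_in Ga adj_av.
  by rewrite /is_uv (negbTE ac) (negbTE av).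
Qed.

Lemma L_proj a c : L a c -> pi a = pi c \/ D' (pi a) (pi c).
Proof.
case uv: (is_uv a c); last by rewrite L_other ?uv // => /andP[_ H]; right.
by move: uv => /orP[|] /andP[/eqP-> /eqP->] _; left; rewrite pi_u pi_v.
Qed.

Lemma connect_L_proj s x : connect L s x -> connect D' (pi s) (pi x).
Proof.
move: s; apply: connect_ind_to => // a c Lac _ IH.
by case: (L_proj Lac) => [->|D'ac] //; apply: connect_trans (connect1 D'ac) IH.
Qed.

Lemma acyclic_orient_uncontract : acyclic_orientation G L.
Proof.
case: D'_acyclic => _ D'tot D'anti D'acyc; split.
- by move=> a c /andP[].
- move=> a c Gac; case uv: (is_uv a c).
    by move: uv; rewrite is_uvE => /orP[|] /andP[/eqP-> /eqP->]; rewrite L_top_bot ?orbT.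
  rewrite L_other ?uv // L_other; last by rewrite is_uv_sym uv.
  rewrite Gac edge_sym Gac /=; exact/D'tot/edge_contract_map/negbT.
- move=> a c; case uv: (is_uv a c).
    by move: uv; rewrite is_uvE => /orP[|] /andP[/eqP-> /eqP->]; rewrite L_bot_top.
  rewrite L_other ?uv // L_other; last by rewrite is_uv_sym uv.
  by case/andP=> _ /D'anti /negbTE->; rewrite andbF.
- move=> a c; case uv: (is_uv a c); last first.
    rewrite L_other ?uv // => /andP[_ D'ac]; apply/negP => /connect_L_proj C.
    by have := D'acyc _ _ D'ac; rewrite C.
  move: uv; rewrite is_uvE => /orP[|] /andP[/eqP-> /eqP->]; last by rewrite L_bot_top.
  (* A cycle through bot -> top leaves bot by an edge whose projection starts
     at u, then returns to pi top = u in the contracted graph. *)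
  move=> _; apply/negP => Cbt.
  have [d Lbd Cdt] : exists2 d, L bot d & connect L d top.
    by apply: connect_first_step Cbt _; rewrite eq_sym top_neq_bot.
  have dt : d != top by apply: contraTneq Lbd => ->; rewrite L_bot_top.
  have db : d != bot.
    by apply: contraTneq Lbd => ->; rewrite /orient_uncontract (negbTE (edge_irrefl _)).
  have dv : d != v by case: top_bot dt db => -[-> ->].
  move: Lbd; rewrite L_other ?is_uvE ?(negbTE dt) ?(negbTE db) ?andbF //.
  rewrite pi_bot pi_nv // => /andP[_ D'ud].
  have := connect_L_proj Cdt; rewrite pi_top pi_nv // => Cdu.
  by have := D'acyc _ _ D'ud; rewrite Cdu.
Qed.

Lemma connect_to_bot z : z = u \/ z = v -> connect L z bot.
Proof.
have := connect1 L_top_bot.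
by case: top_bot => -[Et Eb] ? [->|->]; rewrite -?Et -?Eb ?connect0.
Qed.

Lemma connect_from_top z : z = u \/ z = v -> connect L top z.
Proof.
have := connect1 L_top_bot.
by case: top_bot => -[Et Eb] ? [->|->]; rewrite -?Et -?Eb ?connect0.
Qed.

Lemma connect_D'_lift s x :
  connect D' s x -> connect L s x \/ (connect L s bot /\ connect D' u x).
Proof.
move: s; apply: connect_ind_to; first by left; exact: connect0.
move=> a c D'ac Ccx IH; case: (D'_lift D'ac) => [Lac|[Eau Lvc]|[Ecu Lav]].
- case: IH => [Cl|[Cl Cu]]; first by left; exact: connect_trans (connect1 Lac) Cl.
  by right; split => //; exact: connect_trans (connect1 Lac) Cl.
- right; split; first by rewrite Eau; apply: connect_to_bot; left.
  by rewrite -Eau; exact: connect_trans (connect1 D'ac) Ccx.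
- right; split; first by apply: connect_trans (connect1 Lav) (connect_to_bot _); right.
  by rewrite -Ecu.
Qed.

Lemma connect_D'_lift_uv s x :
  connect D' s x -> [\/ connect L s x, connect L u x | connect L v x].
Proof.
move: s; apply: connect_ind_to; first by apply: Or31; exact: connect0.
move=> a c D'ac _ [C|C|C]; [|by apply: Or32|by apply: Or33].
case: (D'_lift D'ac) => [Lac|[_ Lvc]|[Ecu _]].
- by apply: Or31; exact: connect_trans (connect1 Lac) C.
- by apply: Or33; exact: connect_trans (connect1 Lvc) C.
- by apply: Or32; rewrite -Ecu.
Qed.

Lemma sources_orient_uncontract_sub :
  sources G L \subset sources (contract_edge G u v) D'.
Proof.
apply/subsetP => s; rewrite !inE /= => /andP[Gs /forallP src_s].
have sv : s != v.
  apply/negP => /eqP Esv; subst s; case vu: vu_oriented.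
    case/existsP: (vu) => y /andP[D'yu Gyv].
    have : edge (contract_edge G u v) y u by case: D'_acyclic => D'G _ _ _; apply: D'G.
    rewrite edge_contract_edge => /and5P[yv _ _ _ /andP[yu _]].
    have := src_s y; rewrite L_other; last by rewrite /is_uv (negbTE yu) (negbTE yv).
    by rewrite Gyv pi_v pi_nv // D'yu.
  by have := src_s u; have := L_top_bot_vu; rewrite vu => ->.
rewrite sv Gs /=; apply/forallP => x; apply/negP => D'xs.
case: (D'_lift D'xs) => [Lxs|[_ Lvs]|[Esu Lxv]].
- by have := src_s x; rewrite Lxs.
- by have := src_s v; rewrite Lvs.
- subst s; case vu: vu_oriented; last first.
    by move/negbT/existsPn: vu => /(_ x); rewrite D'xs; case/andP: Lxv => ->.
  by have := src_s v; have := L_top_bot_vu; rewrite vu => ->.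
Qed.

Lemma sources_contract_sub : sources (contract_edge G u v) D' \subset sources G L.
Proof.
apply/subsetP => s; rewrite !inE /= => /andP[/andP[sv Gs] /forallP src_s].
rewrite Gs /=; apply/forallP => x; apply/negP => Lxs.
case uv: (is_uv x s); last first.
  move: Lxs; rewrite L_other ?uv // (pi_nv sv) => /andP[_ D'xs].
  by have := src_s (pi x); rewrite D'xs.
move: uv; rewrite /is_uv (negbTE sv) andbF /= => /andP[/eqP Exv /eqP Esu]; subst x s.
case: top_bot => -[Et Eb]; first by move: Lxs; rewrite -Et -Eb L_bot_top.
have := top_eq_v; rewrite Et eqxx => /esym/existsP[y /andP[D'yu _]].
by have := src_s y; rewrite D'yu.
Qed.

Lemma sources_orient_uncontract : sources G L = sources (contract_edge G u v) D'.
Proof. by apply/eqP; rewrite eqEsubset sources_orient_uncontract_sub sources_contract_sub. Qed.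

Lemma reachB_orient_uncontract (B : {set T}) x : B \subset sources G L -> x != v ->
  x \in reachB D' B <-> x \in reachB L B \/ (connect D' u x /\ bot \in reachB L B).
Proof.
move=> B_src xv; have Bv s : s \in B -> s != v.
  by move/(subsetP B_src); rewrite sources_orient_uncontract !inE => /andP[/andP[]].
split.
  case/reachBP=> s Bs /connect_D'_lift [C|[Cb Cu]].
    by left; apply/reachBP; exists s.
  by right; split => //; apply/reachBP; exists s.
case=> [/reachBP [s Bs C]|[Cu /reachBP [s Bs C]]]; apply/reachBP; exists s => //;
  have := connect_L_proj C; rewrite pi_nv ?Bv //.
  by rewrite pi_nv.
by rewrite pi_bot => /connect_trans; apply.
Qed.

Lemma top_in : top \in verts G.
Proof. by case: top_bot => -[-> _]; [exact: u_in | exact: v_in]. Qed.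

Lemma dag_dtw_le_contract m :
  dag_dtw_le G L m -> dag_dtw_le (contract_edge G u v) D' m.
Proof.
case=> K [te [bag [dtd Hw]]]; case: (dtd) => tree_te bag_src bag_cover _.
exists K, te, bag; split => //.
apply: dtd_of_convex => //; first by case: D'_acyclic.
- by move=> k; rewrite -sources_orient_uncontract.
- by move=> s; rewrite -sources_orient_uncontract; apply: bag_cover.
move=> x; rewrite /= in_setD1 => /andP[xv _].
have x_convex := dtd_convex (x := x) dtd.
have reachE k := reachB_orient_uncontract (bag_src k) xv.
case Cux: (connect D' u x); last first.
  apply: (convex_ext x_convex) => k; split => [Lx|/reachE [//|[]]]; last by rewrite Cux.
  by apply/reachE; left.
have [s0 src0 C0] := exists_source_connect acyclic_orient_uncontract top_in.
have [k0 bag_s0] := bag_cover _ src0.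
have bot_convex := dtd_convex (x := bot) dtd.
have union_convex :
    convex te (fun k => x \in reachB L (bag k) \/ bot \in reachB L (bag k)).
  apply: (convex_union (k0 := k0) tree_te x_convex bot_convex); apply/reachBP; exists s0 => //.
    case: (connect_D'_lift_uv Cux) => C;
      apply: connect_trans C0 (connect_trans (connect_from_top _) C); by [left | right].
  exact: connect_trans C0 (connect1 L_top_bot).
apply: (convex_ext union_convex) => k; split => [[Lx|Lb]|/reachE [Lx|[_ Lb]]]; auto.
  by apply/reachE; left.
by apply/reachE; right.
Qed.

End Contraction.

Section Isomorphism.
Variables (U T : finType) (I : graph U) (H : graph T) (phi : U -> T).
Hypotheses (phi_inj : {in verts I &, injective phi}) (phi_onto : phi @: verts I = verts H).
Hypothesis phi_edge : {in verts I &, forall x y, edge I x y = edge H (phi x) (phi y)}.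
Variable DI : rel U.
Hypothesis DI_acyclic : acyclic_orientation I DI.

Definition image_orient : rel T := fun a c => [exists x, [exists y,
  [&& x \in verts I, y \in verts I, phi x == a, phi y == c & DI x y]]].

Local Notation DH := image_orient.

Lemma DI_verts x y : DI x y -> x \in verts I /\ y \in verts I.
Proof. by case: DI_acyclic => DIG _ _ _ /DIG /and3P[]. Qed.

Lemma image_orient_phi x y : DI x y -> DH (phi x) (phi y).
Proof.
move=> DIxy; have [Ix Iy] := DI_verts DIxy.
by apply/existsP; exists x; apply/existsP; exists y; rewrite Ix Iy !eqxx DIxy.
Qed.

Lemma image_orientP a c :
  DH a c -> exists x y, [/\ x \in verts I, y \in verts I, a = phi x, c = phi y & DI x y].
Proof. by case/existsP=> x /existsP[y /and5P[Ix Iy /eqP <- /eqP <- DIxy]]; exists x, y. Qed.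

Lemma image_orient_from x c :
  x \in verts I -> DH (phi x) c -> exists2 y, c = phi y & DI x y.
Proof.
move=> Ix /image_orientP[x' [y [Ix' _ Ex -> DIxy]]].
by rewrite (phi_inj Ix Ix' Ex); exists y.
Qed.

Lemma verts_phi a : a \in verts H -> exists2 x, x \in verts I & a = phi x.
Proof. by rewrite -phi_onto => /imsetP. Qed.

Lemma connect_image_orientE s x : s \in verts I -> x \in verts I ->
  connect DH (phi s) (phi x) = connect DI s x.
Proof.
move=> Is Ix; apply/idP/idP; last first.
  apply: (connect_ind_to (Q := fun s => connect DH (phi s) (phi x))) => // a c.
  by move=> /image_orient_phi/connect1 Cac _; apply: connect_trans Cac.
case/connectP=> p; elim: p s Is => [|a p IHp] s Is /=.
  by move=> _ /(phi_inj Ix Is) ->; exact: connect0.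
case/andP=> /(image_orient_from Is) [y -> DIsy] Hp Hl.
have [_ Iy] := DI_verts DIsy.
exact: connect_trans (connect1 DIsy) (IHp y Iy Hp Hl).
Qed.

Lemma acyclic_image_orient : acyclic_orientation H DH.
Proof.
case: DI_acyclic => DIG DItot DIanti DIacyc; split.
- by move=> a c /image_orientP[x [y [Ix Iy -> -> /DIG]]]; rewrite (phi_edge Ix Iy).
- move=> a c Hac; have /and3P[/verts_phi[x Ix Ea] /verts_phi[y Iy Ec] _] := Hac.
  subst a c.
  have /DItot : edge I x y by rewrite (phi_edge Ix Iy).
  by case/orP=> /image_orient_phi ->; rewrite ?orbT.
- move=> a c /image_orientP[x [y [Ix Iy -> -> DIxy]]].
  apply/negP => /(image_orient_from Iy) [x' /(phi_inj Ix) Ex DIyx'].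
  have [_ Ix'] := DI_verts DIyx'.
  by have := DIanti _ _ DIxy; rewrite Ex // DIyx'.
- move=> a c /image_orientP[x [y [Ix Iy -> -> DIxy]]].
  by rewrite connect_image_orientE // DIacyc.
Qed.

Lemma sources_image_orient s : s \in verts I ->
  (phi s \in sources H DH) = (s \in sources I DI).
Proof.
move=> Is; rewrite !inE Is -phi_onto (imset_f phi Is) /=.
apply/forallP/forallP => src_s z; apply/negP.
  by move/image_orient_phi; apply/negP.
case/image_orientP=> x [y [Ix Iy _ Es DIxy]].
by have := src_s x; rewrite (phi_inj Is Iy Es) DIxy.
Qed.

Lemma dag_dtw_le_image m : dag_dtw_le H DH m -> dag_dtw_le I DI m.
Proof.
case=> K [te [bag [dtd Hw]]]; case: (dtd) => tree_te bag_src bag_cover _.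
pose bag' k := [set x in verts I | phi x \in bag k].
exists K, te, bag'; split; last first.
  apply: leq_trans Hw; apply: dtd_width_mono => k.
  have phi_inj' : {in bag' k &, injective phi}.
    by move=> x y; rewrite !inE => /andP[Ix _] /andP[Iy _]; apply: phi_inj.
  rewrite -(card_in_imset phi_inj'); apply: subset_leq_card.
  by apply/subsetP => a /imsetP[x + ->]; rewrite inE => /andP[].
apply: dtd_of_convex => //; first by case: DI_acyclic.
- move=> k; apply/subsetP => x; rewrite inE => /andP[Ix bag_x].
  by rewrite -sources_image_orient //; apply: (subsetP (bag_src k)).
- move=> s src_s; have Is : s \in verts I by apply: (subsetP (sources_verts _ _)) src_s.
  rewrite -sources_image_orient // in src_s; have [k bag_s] := bag_cover _ src_s.
  by exists k; rewrite inE Is bag_s.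
move=> x Ix; have phix_convex := dtd_convex (x := phi x) dtd.
apply: (convex_ext phix_convex) => k; split.
  case/reachBP=> a bag_a C.
  have /verts_phi[s Is Ea] : a \in verts H.
    exact: subsetP (sources_verts _ _) _ (subsetP (bag_src k) _ bag_a).
  apply/reachBP; exists s; first by rewrite inE Is -Ea.
  by rewrite -connect_image_orientE // -Ea.
case/reachBP=> s; rewrite inE => /andP[Is bag_s] C.
by apply/reachBP; exists (phi s); rewrite ?connect_image_orientE.
Qed.

End Isomorphism.

Section Monotonicity.
Variables (T : finType) (G : graph T) (m : nat).

Lemma dtw_le_delete_vertex v :
  simple_graph G -> dtw_le G m -> dtw_le (delete_vertex G v) m.
Proof.
move=> simpleG Gm D' D'_acyclic.
exact/(dag_dtw_le_delete simpleG D'_acyclic)/Gm/acyclic_orient_into.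
Qed.

Lemma dtw_le_contract_edge u v :
  edge G u v -> simple_graph G -> dtw_le G m -> dtw_le (contract_edge G u v) m.
Proof.
move=> Guv simpleG Gm D' D'_acyclic.
exact/(dag_dtw_le_contract Guv simpleG D'_acyclic)/Gm/acyclic_orient_uncontract.
Qed.

End Monotonicity.

Lemma simple_minor_step (T : finType) (G G' : graph T) :
  minor_step G G' -> simple_graph G -> simple_graph G'.
Proof. by case=> [v _|u v Guv]; [exact: simple_delete_vertex | exact: simple_contract_edge]. Qed.

Lemma dtw_le_del_con_seq (T : finType) (G G' : graph T) m :
  del_con_seq G G' -> simple_graph G -> dtw_le G m -> dtw_le G' m.
Proof.
elim=> {G G'} [//|G G' G'' step _ IH] simpleG Gm.
apply: IH (simple_minor_step step simpleG) _.
case: step simpleG Gm => [v _|u v Guv]; [exact: dtw_le_delete_vertex | exact: dtw_le_contract_edge].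
Qed.

Lemma dtw_le_graph_iso (U T : finType) (I : graph U) (H : graph T) m :
  graph_iso I H -> dtw_le H m -> dtw_le I m.
Proof.
case=> phi [phi_inj phi_onto phi_edge] Hm DI DI_acyclic.
exact/(dag_dtw_le_image phi_inj phi_onto DI_acyclic)/Hm/acyclic_image_orient.
Qed.

Lemma dtw_le_induced_minor (U T : finType) (I : graph U) (H : graph T) m :
  induced_minor I H -> simple_graph H -> dtw_le H m -> dtw_le I m.
Proof.
case=> H' [seqHH' isoIH'] simpleH Hm.
exact/(dtw_le_graph_iso isoIH')/(dtw_le_del_con_seq seqHH').
Qed.

Lemma dtw_le_dtw (T : finType) (G : graph T) : dtw_le G (dtw G).
Proof.
by rewrite /dtw; case: ex_minnP => k; rewrite /dtw_leb; case: excluded_middle_informative.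
Qed.

Lemma dtw_min (T : finType) (G : graph T) m : dtw_le G m -> dtw G <= m.
Proof.
move=> Gm; rewrite /dtw; case: ex_minnP => k _; apply.
by rewrite /dtw_leb; case: excluded_middle_informative.
Qed.

Theorem mainTheorem16 (U T : finType) (I : graph U) (H : graph T) :
  simple_graph H -> simple_graph I -> induced_minor I H ->
  dtw I <= dtw H.
Proof.
move=> simpleH _ IH; apply: dtw_min.
exact/(dtw_le_induced_minor IH simpleH)/dtw_le_dtw.
Qed.
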